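(* Let $(G,d)$ be a boundedly compact $p$-uniformly convex metric space with $p\in(1,\infty)$ and $c>0$, $f:G\to\mathbb{R}$ proper, lower semicontinuous and convex, and $\lambda>0$. Then $x_+=\mathrm{prox}^p_{f,\lambda}(x)$ if and only if $$\frac{4}{cp\lambda^{p-1}}\Delta^{(p,c)}(x_+,x,x_+,y)-\frac{2-c}{2p\lambda^{p-1}}d(x_+,y)^p\le f(y)-f(x_+)\qquad\forall y\in G.$$
   Context: $(G,d)$ is uniquely geodesic; $(1-\tau)x\oplus\tau y$ is the point on the geodesic from $x$ to $y$ at distance $\tau d(x,y)$ from $x$. $p$-uniform convexity with constant $c$: $d(z,(1-\tau)x\oplus\tau y)^p\le(1-\tau)d(z,x)^p+\tau d(z,y)^p-\frac c2\tau(1-\tau)d(x,y)^p$. $f$ convex: $f((1-\tau)x\oplus\tau y)\le(1-\tau)f(x)+\tau f(y)$. $\mathrm{prox}^p_{f,\lambda}(x)=\operatorname{argmin}_{y\in G}\{f(y)+\frac1{p\lambda^{p-1}}d(y,x)^p\}$. $\Delta^{(p,c)}(x,y,u,v)=\frac c4\big(d(x,v)^p+d(y,u)^p-d(x,u)^p-d(y,v)^p\big)$. *)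

From Stdlib Require Import Reals Lra.
Open Scope R_scope.

(* Real power with the convention 0^a = 0 (a > 0), as used for d(x,y)^p. *)
Definition rpow (x a : R) : R := if Rle_dec x 0 then 0 else Rpower x a.

Section Defs.
Variable G : Type.
Variable d : G -> G -> R.

Definition is_metric : Prop :=
  (forall x y, 0 <= d x y) /\
  (forall x y, d x y = 0 <-> x = y) /\
  (forall x y, d x y = d y x) /\
  (forall x y z, d x z <= d x y + d y z).

Definition is_geodesic (gamma : R -> G) (x y : G) : Prop :=
  gamma 0 = x /\ gamma 1 = y /\
  (forall s t, 0 <= s <= 1 -> 0 <= t <= 1 ->
     d (gamma s) (gamma t) = Rabs (s - t) * d x y).

(* geo x y tau = (1-tau) x (+) tau y : G is uniquely geodesic and geo
   parametrizes the unique geodesic from x to y. *)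
Definition uniquely_geodesic_with (geo : G -> G -> R -> G) : Prop :=
  forall x y, is_geodesic (geo x y) x y /\
    (forall gamma, is_geodesic gamma x y ->
       forall t, 0 <= t <= 1 -> gamma t = geo x y t).

Definition seq_converges (u : nat -> G) (l : G) : Prop :=
  forall eps, 0 < eps -> exists N, forall n, (N <= n)%nat -> d (u n) l < eps.

Definition closed_set (S : G -> Prop) : Prop :=
  forall u l, (forall n, S (u n)) -> seq_converges u l -> S l.

Definition bounded_set (S : G -> Prop) : Prop :=
  exists z r, forall x, S x -> d z x <= r.

(* sequential compactness (equivalent to compactness in metric spaces) *)
Definition compact_set (A : G -> Prop) : Prop :=
  forall u : nat -> G, (forall n, A (u n)) ->
    exists (phi : nat -> nat) l,
      (forall n, (phi n < phi (Datatypes.S n))%nat) /\ A l /\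
      seq_converges (fun n => u (phi n)) l.

Definition boundedly_compact : Prop :=
  forall A, closed_set A -> bounded_set A -> compact_set A.

Definition p_uniformly_convex (geo : G -> G -> R -> G) (p c : R) : Prop :=
  forall x y z tau, 0 <= tau <= 1 ->
    rpow (d z (geo x y tau)) p <=
      (1 - tau) * rpow (d z x) p + tau * rpow (d z y) p
      - c / 2 * tau * (1 - tau) * rpow (d x y) p.

Definition convex_fun (geo : G -> G -> R -> G) (f : G -> R) : Prop :=
  forall x y tau, 0 <= tau <= 1 ->
    f (geo x y tau) <= (1 - tau) * f x + tau * f y.

Definition lsc (f : G -> R) : Prop :=
  forall x eps, 0 < eps -> exists delta, 0 < delta /\
    forall y, d x y < delta -> f x - eps < f y.

(* "proper": for a real-valued f on G this only asks the effective domain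
   to be nonempty, i.e. G is nonempty. *)
Definition proper_fun (f : G -> R) : Prop := exists x : G, True.

Definition is_prox (f : G -> R) (p lambda : R) (x xp : G) : Prop :=
  forall y, f xp + / (p * rpow lambda (p - 1)) * rpow (d xp x) p
            <= f y + / (p * rpow lambda (p - 1)) * rpow (d y x) p.

Definition Delta_pc (p c : R) (x y u v : G) : R :=
  c / 4 * (rpow (d x v) p + rpow (d y u) p - rpow (d x u) p - rpow (d y v) p).

End Defs.

Arguments is_metric {G}. Arguments is_geodesic {G}. Arguments uniquely_geodesic_with {G}.
Arguments seq_converges {G}. Arguments closed_set {G}. Arguments bounded_set {G}.
Arguments compact_set {G}. Arguments boundedly_compact {G}. Arguments p_uniformly_convex {G}.
Arguments convex_fun {G}. Arguments lsc {G}. Arguments proper_fun {G}.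
Arguments is_prox {G}. Arguments Delta_pc {G}.

(* Write [A = 1 / (p lambda^(p-1))] and [D u v = d(u,v)^p].  Because
   [D(xp,xp) = 0], the inequality of the theorem reads
   [A (c/2 D(xp,y) + D(xp,x) - D(y,x)) <= f y - f xp].  Dropping the
   nonnegative term [c/2 D(xp,y)] gives the minimality of [xp].
   Conversely, compare [xp] with the point [z_t = (1-t) xp (+) t y] of the
   geodesic towards [y]: convexity of [f] and [p]-uniform convexity of
   [D(x,.)] yield the inequality with [c/2 D(xp,y)] weakened to
   [(1-t) c/2 D(xp,y)], and [t -> 0] gives it in full.  Bounded compactness,
   lower semicontinuity and properness only matter for the existence of the
   prox, which the characterization does not use. *)
From Stdlib Require Import Reals Lra Psatz.
Open Scope R_scope.

Lemma rpow_ge0 (x a : R) : 0 <= rpow x a.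
Proof.
  unfold rpow; destruct (Rle_dec x 0); [lra|].
  left; apply exp_pos.
Qed.

Lemma rpow_gt0 (x a : R) : 0 < x -> 0 < rpow x a.
Proof.
  intros Hx; unfold rpow; destruct (Rle_dec x 0); [lra|].
  apply exp_pos.
Qed.

Lemma rpow_0l (a : R) : rpow 0 a = 0.
Proof. unfold rpow; destruct (Rle_dec 0 0); lra. Qed.

Lemma le_of_forall_one_sub_mul_le (M K : R) :
  (forall t, 0 < t <= 1 -> (1 - t) * M <= K) -> M <= K.
Proof.
  intros H.
  destruct (Rle_dec M 0) as [HM|HM].
  - specialize (H 1 ltac:(lra)); lra.
  - destruct (Rle_dec M K) as [|HKM]; [assumption|exfalso].
    (* [t = (M - K) / (2M - K)] makes [(1 - t) M - K = (M - K)^2 / (2M - K)]. *)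
    assert (Hden : 0 < 2 * M - K) by lra.
    assert (Ht : 0 < (M - K) / (2 * M - K) <= 1).
    { split.
      - apply Rdiv_lt_0_compat; lra.
      - apply Rmult_le_reg_r with (2 * M - K); [lra|].
        unfold Rdiv; rewrite Rmult_assoc, Rinv_l; lra. }
    specialize (H _ Ht).
    assert (E : (1 - (M - K) / (2 * M - K)) * M - K
                = (M - K) ^ 2 / (2 * M - K)) by (field; lra).
    assert (0 < (M - K) ^ 2 / (2 * M - K))
      by (apply Rdiv_lt_0_compat; nra).
    lra.
Qed.

Section ProxCharacterization.

Variables (G : Type) (d : G -> G -> R) (geo : G -> G -> R -> G).
Variables (p c lambda : R) (f : G -> R).
Hypothesis d_sym : forall u v, d u v = d v u.

Let D (u v : G) : R := rpow (d u v) p.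
Let A : R := / (p * rpow lambda (p - 1)).

Lemma is_prox_geodesic_bound (x xp y : G) (t : R) :
  0 <= A -> p_uniformly_convex d geo p c -> convex_fun geo f ->
  is_prox d f p lambda x xp -> 0 < t <= 1 ->
  (1 - t) * (A * (c / 2) * D xp y) <= f y - f xp + A * (D y x - D xp x).
Proof.
  intros HA Huc Hcvx Hprox Ht.
  set (z := geo xp y t).
  assert (Hmin := Hprox z); fold A in Hmin.
  assert (Hf := Hcvx xp y t ltac:(lra)); fold z in Hf.
  assert (Hu := Huc xp y x t ltac:(lra)); fold z in Hu.
  rewrite (d_sym x z), (d_sym x xp), (d_sym x y) in Hu.
  assert (HAu := Rmult_le_compat_l A _ _ HA Hu).
  fold (D z x) (D xp x) (D y x) (D xp y) in Hmin, HAu.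
  assert (Hscaled : t * ((1 - t) * (A * (c / 2) * D xp y))
                    <= t * (f y - f xp + A * (D y x - D xp x))) by nra.
  apply Rmult_le_reg_l in Hscaled; lra.
Qed.

Lemma is_prox_iff_variational (x xp : G) :
  0 <= A -> 0 <= c -> p_uniformly_convex d geo p c -> convex_fun geo f ->
  is_prox d f p lambda x xp <->
  forall y, A * (c / 2 * D xp y + D xp x - D y x) <= f y - f xp.
Proof.
  intros HA Hc Huc Hcvx; split.
  - intros Hprox y.
    assert (Hy : A * (c / 2) * D xp y <= f y - f xp + A * (D y x - D xp x)).
    { apply le_of_forall_one_sub_mul_le; intros t Ht.
      exact (is_prox_geodesic_bound x xp y t HA Huc Hcvx Hprox Ht). }
    lra.
  - intros Hvar y; specialize (Hvar y).
    unfold is_prox; fold A (D xp x) (D y x).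
    assert (0 <= A * (c / 2) * D xp y)
      by (apply Rmult_le_pos; [nra | apply rpow_ge0]).
    nra.
Qed.

Lemma Delta_pc_prox_form (x xp y : G) :
  0 < p -> 0 < c -> 0 < lambda -> d xp xp = 0 ->
  4 / (c * p * rpow lambda (p - 1)) * Delta_pc d p c xp x xp y
  - (2 - c) / (2 * p * rpow lambda (p - 1)) * D xp y
  = A * (c / 2 * D xp y + D xp x - D y x).
Proof.
  intros Hp Hc Hl Hxx.
  assert (HL : 0 < rpow lambda (p - 1)) by (apply rpow_gt0; lra).
  unfold Delta_pc, A, D.
  rewrite Hxx, rpow_0l, (d_sym x xp), (d_sym x y).
  field; lra.
Qed.

End ProxCharacterization.

Theorem mainTheorem10 (G : Type) (d : G -> G -> R) (geo : G -> G -> R -> G)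
  (p c lambda : R) (f : G -> R) (x xp : G) :
  is_metric d ->
  uniquely_geodesic_with d geo ->
  boundedly_compact d ->
  1 < p -> 0 < c ->
  p_uniformly_convex d geo p c ->
  proper_fun f -> lsc d f -> convex_fun geo f ->
  0 < lambda ->
  (is_prox d f p lambda x xp <->
   forall y : G,
     4 / (c * p * rpow lambda (p - 1)) * Delta_pc d p c xp x xp y
     - (2 - c) / (2 * p * rpow lambda (p - 1)) * rpow (d xp y) p
     <= f y - f xp).
Proof.
  intros [_ [Hzero [Hsym _]]] _ _ Hp Hc Huc _ _ Hcvx Hl.
  assert (HA : 0 <= / (p * rpow lambda (p - 1))).
  { left; apply Rinv_0_lt_compat, Rmult_lt_0_compat; [lra|].
    apply rpow_gt0; lra. }
  rewrite (is_prox_iff_variational G d geo p c lambda f Hsym x xp HA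
             ltac:(lra) Huc Hcvx).
  split; intros H y; specialize (H y);
    rewrite (Delta_pc_prox_form G d p c lambda Hsym x xp y
               ltac:(lra) Hc Hl (proj2 (Hzero xp xp) eq_refl)) in *;
    exact H.
Qed.
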